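(* Assume the model (M.2) with $M_0>1$ and the sub-Gaussian condition (A.4) described in the context, and let Algorithm 2 be applied to $X_1,\ldots,X_N$. Let $k\in\{2,\ldots,M_0\}$ and let $\eta=\eta(N)$ be an integer with $1\le\eta\le\min\{N_{k-1},N_{k+1}\}$. Let $E_{k,N}$ be the event that there exist integers $1\le n_1\le N_k$, $1\le n_2\le\eta$, $1\le n_3\le\eta$ such that $\{X^{(k-1)}_n:n=N_{k-1}-n_3+1,\ldots,N_{k-1}\}\cup\{X^{(k)}_n:n=1,\ldots,n_1\}$ and $\{X^{(k)}_n:n=n_1+1,\ldots,N_k\}\cup\{X^{(k+1)}_n:n=1,\ldots,n_2\}$ are two detected segments. Assume $$f(N)\ge\max\{100|\mu_{k-1}-\mu_k|^2\eta,\ 100|\mu_k-\mu_{k+1}|^2\eta,\ C\log N\},$$ where $C>100D/c_0$ is a constant. Then $\Pr(\limsup_{N\to\infty}E_{k,N})=0$.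
   Context: Model (M.2): for each sample size $N$ one observes independent random vectors $X_1,\ldots,X_N\in\mathbb{R}^D$ ($D\in\mathbb{N}$ fixed). There are $M_0\ge 0$ (fixed) change points $0=L_0<L_1<\cdots<L_{M_0}<L_{M_0+1}=N$ (depending on $N$), with segment sizes $N_k=L_k-L_{k-1}$, $N_k\to\infty$; for each $k$, $X_{L_{k-1}+1},\ldots,X_{L_k}$ are i.i.d. with distribution $\mathcal{G}_k$ with mean $\mu_k$ and finite covariance; $\mu_k\neq\mu_{k+1}$. Write $X^{(k)}_n=X_{L_{k-1}+n}$, $n=1,\ldots,N_k$. (A.4): there is $c_0>0$ such that for every $k$, coordinate $d$, $n\ge1$ and $a>0$, the mean $\bar Z$ of $n$ i.i.d. copies of the $d$-th marginal of $\mathcal{G}_k$ satisfies $\Pr(|\bar Z-E\bar Z|\ge a)\le2e^{-c_0a^2n}$. Quadratic loss: $\mathrm{Loss}_q(x_a,\ldots,x_b)=\sum_{n=a}^b|x_n-\bar x|^2$, $\bar x$ the sample mean, $|\cdot|$ Euclidean norm. Algorithm 2 (inputs $M_{\max}\ge1$, penalty $f(N)>0$, minimal segment size $\beta(N)$): for $k=0,1,\ldots,M_{\max}$ compute $\hat e_k=\min\sum_{j=1}^{k+1}\mathrm{Loss}_q(x_{\ell_{j-1}+1},\ldots,x_{\ell_j})$ over $0=\ell_0<\ell_1<\cdots<\ell_{k+1}=N$ with a minimizer; if its smallest segment has size $<\beta(N)$, set $M=k-1$ and stop (else $M=M_{\max}$). Output $\hat M=\arg\min_{0\le k\le M}(\hat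 e_k+kf(N))$ and the change points $\hat\ell_1<\cdots<\hat\ell_{\hat M}$ of the minimizer for $k=\hat M$. The detected segments are the blocks $\{X_n:n=\hat\ell_{j-1}+1,\ldots,\hat\ell_j\}$, $j=1,\ldots,\hat M+1$ ($\hat\ell_0=0,\hat\ell_{\hat M+1}=N$); ''two detected segments'' means two neighboring ones, in the order listed. $\limsup_N E_N$ is the event that $E_N$ occurs for infinitely many $N$. *)

From HB Require Import structures.
From mathcomp Require Import all_boot all_order all_algebra.
From mathcomp Require Import all_classical all_reals all_analysis.
Set Implicit Arguments. Unset Strict Implicit. Unset Printing Implicit Defensive.
Import Order.TTheory GRing.Theory Num.Theory.
Local Open Scope classical_set_scope.
Local Open Scope ring_scope.

Section Defs.
Variable R : realType.

(** Vectors of R^D are represented by D.-tuple R (which carries the product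
    sigma-algebra generated by the coordinate projections). *)

Definition sqdist (D : nat) (u v : D.-tuple R) : R :=
  \sum_(i < D) (tnth u i - tnth v i) ^+ 2.

(** Data are 1-indexed: x 1, ..., x N. *)
Definition seg_mean (D : nat) (x : nat -> D.-tuple R) (a b : nat) : D.-tuple R :=
  [tuple (\sum_(a <= n < b.+1) tnth (x n) i) / (b.+1 - a)%:R | i < D].

Definition Loss_q (D : nat) (x : nat -> D.-tuple R) (a b : nat) : R :=
  \sum_(a <= n < b.+1) sqdist (x n) (seg_mean x a b).

Definition bounds (N : nat) (l : seq nat) : seq nat := 0%N :: l ++ [:: N].

Definition valid_partition (N k : nat) (l : seq nat) : Prop :=
  size l = k /\ sorted ltn (bounds N l).

Definition cost (D : nat) (x : nat -> D.-tuple R) (N : nat) (l : seq nat) : R :=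
  \sum_(j < (size l).+1)
     Loss_q x (nth 0%N (bounds N l) j).+1 (nth 0%N (bounds N l) j.+1).

Definition is_minimizer (D : nat) (x : nat -> D.-tuple R) (N k : nat)
  (l : seq nat) : Prop :=
  valid_partition N k l /\
  forall l', valid_partition N k l' -> cost x N l <= cost x N l'.

Definition small_segment (N : nat) (l : seq nat) (beta : R) : Prop :=
  exists j, (j < (size l).+1)%N /\
    ((nth 0%N (bounds N l) j.+1 - nth 0%N (bounds N l) j)%:R < beta).

(** (Mhat, lhat) is an output of Algorithm 2 (for some admissible choice of
    minimizers, i.e. some tie-breaking rule) on data x_1..x_N. *)
Definition Alg2_output (D : nat) (x : nat -> D.-tuple R) (N Mmax : nat)
  (fN beta : R) (Mhat : nat) (lhat : seq nat) : Prop :=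
  exists (m : nat -> seq nat) (M : nat),
    (forall j, (j <= M)%N -> is_minimizer x N j (m j)) /\
    ((M = Mmax /\ forall j, (j <= Mmax)%N -> ~ small_segment N (m j) beta)
     \/ ((M.+1 <= Mmax)%N /\ is_minimizer x N M.+1 (m M.+1) /\
         small_segment N (m M.+1) beta /\
         forall j, (j <= M)%N -> ~ small_segment N (m j) beta)) /\
    (Mhat <= M)%N /\
    (forall j, (j <= M)%N ->
       cost x N (m Mhat) + Mhat%:R * fN <= cost x N (m j) + j%:R * fN) /\
    lhat = m Mhat.

Definition mutually_independent {d d'} {T : measurableType d}
  {T' : measurableType d'} (P : probability T R) (I : set nat)
  (Y : nat -> T -> T') : Prop :=
  (forall i, I i -> measurable_fun setT (Y i)) /\
  forall (S : seq nat) (B : nat -> set T'),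
    uniq S -> (forall i, i \in S -> I i) -> (forall i, measurable (B i)) ->
    P [set w | forall i, i \in S -> B i (Y i w)] =
      (\prod_(i <- S) fine (P (Y i @^-1` B i)))%:E.

Definition limsup_event {T : Type} (E : nat -> set T) : set T :=
  [set w | forall N0, exists N, (N0 <= N)%N /\ E N w].

End Defs.

(** Suppose two consecutive detected segments are (L_{k-1} - n3, L_{k-1} + n1]
    and (L_{k-1} + n1, L_k + n2].  Deleting their common boundary yields a
    partition with one change point less, so optimality of the penalized cost
    forces f(N) to be at most the increase of the quadratic loss caused by the
    merge.  That increase is bounded by the normalized squared deviations
    (sum of centred data)^2 / length of the two merged blocks; splitting them
    at L_{k-1} and L_k, it is at most 16 D tau + 4 (n3 |mu_{k-1} - mu_k|^2 +
    n2 |mu_k - mu_{k+1}|^2) < f(N) as soon as every block inside a true segment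
    has normalized deviation below tau = f(N) / (25 D).  By (A.4) a fixed block
    violates this with probability at most 2 exp(-c0 tau) <= 2 N^-4; a union
    bound over the O(N^2) blocks and Borel-Cantelli conclude. *)

From HB Require Import structures.
From mathcomp Require Import all_boot all_order all_algebra.
From mathcomp Require Import all_classical all_reals all_analysis.
From mathcomp Require Import ring lra zify.
Import Order.TTheory GRing.Theory Num.Theory.
Local Open Scope classical_set_scope.
Local Open Scope ring_scope.

Set Implicit Arguments.
Unset Strict Implicit.
Unset Printing Implicit Defensive.

Section real_inequalities.
Variable R : realType.

Lemma sqr_div_le_addr (z p r : R) : 0 <= p -> 0 <= r -> (p = 0 -> z = 0) ->
  z ^+ 2 / (p + r) <= z ^+ 2 / p.
Proof.
move=> p_ge0 r_ge0 z0; have [p0|p_neq0] := eqVneq p 0.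
  by rewrite (z0 p0) expr0n /= !mul0r.
have p_gt0 : 0 < p by rewrite lt_def p_neq0.
by rewrite ler_wpM2l ?sqr_ge0 // lef_pV2 ?posrE ?ltr_wpDr // lerDl.
Qed.

Lemma sqr_mul_div (p z : R) : (p * z) ^+ 2 / p = p * z ^+ 2.
Proof.
have [->|p_neq0] := eqVneq p 0; first by rewrite mul0r expr0n /= !mul0r.
by field.
Qed.

Lemma sqr_add4_le (u v w z : R) :
  (u + v + w + z) ^+ 2 <= 4 * (u ^+ 2 + v ^+ 2 + w ^+ 2 + z ^+ 2).
Proof.
rewrite -subr_ge0.
have -> : 4 * (u ^+ 2 + v ^+ 2 + w ^+ 2 + z ^+ 2) - (u + v + w + z) ^+ 2 =
  (u - v) ^+ 2 + (u - w) ^+ 2 + (u - z) ^+ 2 + (v - w) ^+ 2 + (v - z) ^+ 2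
  + (w - z) ^+ 2 by ring.
by rewrite !addr_ge0 ?sqr_ge0.
Qed.

Lemma expR_le_inv_pow4 (N : nat) (z : R) : (1 <= N)%N -> 4 * ln N%:R <= z ->
  expR (- z) <= (N%:R ^+ 4)^-1.
Proof.
move=> N_ge1 le_z; have -> : (N%:R ^+ 4)^-1 = expR (- (4 * ln N%:R)) :> R.
  by rewrite expRN expRM_natl lnK // posrE ltr0n.
by rewrite ler_expR lerN2.
Qed.

(* At N = 0 the left-hand side is 0, as 0^-1 = 0. *)
Lemma sqr_inv_pow4_le (N : nat) :
  N.+1%:R ^+ 2 * (N%:R ^+ 4)^-1 <= 16 / N.+1%:R ^+ 2 :> R.
Proof.
case: N => [|N]; first by rewrite expr0n /= invr0 mulr0 divr_ge0.
rewrite -[N.+2%:R]natr1; have : 1 <= N.+1%:R :> R by rewrite ler1n.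
move: N.+1%:R => x x_ge1; have x_gt0 : 0 < x by lra.
rewrite -subr_ge0.
have -> : 16 / (x + 1) ^+ 2 - (x + 1) ^+ 2 * (x ^+ 4)^-1 =
  (x - 1) * (3 * x + 1) * (4 * x ^+ 2 + (x + 1) ^+ 2) / (x ^+ 4 * (x + 1) ^+ 2).
  have x1_gt0 : 0 < x + 1 by lra.
  by field; rewrite !gt_eqF.
have x1_gt0 : 0 < x + 1 by lra.
apply: divr_ge0; last by rewrite mulr_ge0 // exprn_ge0 // ltW.
apply: mulr_ge0; first by apply: mulr_ge0; lra.
by rewrite addr_ge0 ?sqr_ge0 // mulr_ge0 // sqr_ge0.
Qed.

End real_inequalities.

Section deviation.
Variable R : realType.

Definition dev_sum (y : nat -> R) (lo hi : nat) (m : R) : R :=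
  \sum_(lo.+1 <= n < hi.+1) (y n - m).

Definition coord_seq (D : nat) (x : nat -> D.-tuple R) (i : 'I_D) : nat -> R :=
  fun n => tnth (x n) i.

(* It vanishes on empty blocks, where the division is by 0. *)
Definition norm_dev (y : nat -> R) (lo hi : nat) (m : R) : R :=
  dev_sum y lo hi m ^+ 2 / (hi - lo)%:R.

Lemma dev_sum_cat (y : nat -> R) lo mid hi m : (lo <= mid <= hi)%N ->
  dev_sum y lo hi m = dev_sum y lo mid m + dev_sum y mid hi m.
Proof. by case/andP=> le_lo_mid le_mid_hi; apply: big_cat_nat. Qed.

Lemma dev_sum_recenter (y : nat -> R) lo hi m m' :
  dev_sum y lo hi m' = dev_sum y lo hi m + (hi - lo)%:R * (m - m').
Proof.
rewrite mulr_natl -(subSS lo hi) -sumr_const_nat -big_split /=.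
by apply: eq_bigr => n _; rewrite addrA subrK.
Qed.

Lemma dev_sum_empty (y : nat -> R) lo hi m :
  (hi <= lo)%N -> dev_sum y lo hi m = 0.
Proof. by move=> le_hi_lo; rewrite /dev_sum big_geq. Qed.

Lemma norm_dev_split_le (y : nat -> R) lo t hi c m1 m2 : (lo <= t <= hi)%N ->
  norm_dev y lo hi c <= 4 * (norm_dev y lo t m1 + (t - lo)%:R * (m1 - c) ^+ 2
                            + norm_dev y t hi m2 + (hi - t)%:R * (m2 - c) ^+ 2).
Proof.
move=> lo_t_hi; rewrite /norm_dev (dev_sum_cat _ _ lo_t_hi).
rewrite (dev_sum_recenter _ _ _ m1) (dev_sum_recenter _ t _ m2).
case/andP: lo_t_hi => le_lo_t le_t_hi.
have -> : (hi - lo)%:R = (t - lo)%:R + (hi - t)%:R :> R.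
  by rewrite -natrD; congr _%:R; lia.
have u0 : (t - lo)%:R = 0 :> R -> dev_sum y lo t m1 = 0.
  by move/eqP; rewrite pnatr_eq0 subn_eq0 => /dev_sum_empty ->.
have w0 : (hi - t)%:R = 0 :> R -> dev_sum y t hi m2 = 0.
  by move/eqP; rewrite pnatr_eq0 subn_eq0 => /dev_sum_empty ->.
move: u0 w0; set p := (t - lo)%:R; set r := (hi - t)%:R.
set u := dev_sum y lo t m1; set w := dev_sum y t hi m2 => u0 w0.
have p_ge0 : 0 <= p by rewrite ler0n.
have r_ge0 : 0 <= r by rewrite ler0n.
have pz0 (z : R) : p = 0 -> p * z = 0 by move->; rewrite mul0r.
have rz0 (z : R) : r = 0 -> r * z = 0 by move->; rewrite mul0r.
apply: le_trans (_ : 4 * (u ^+ 2 + (p * (m1 - c)) ^+ 2 + w ^+ 2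
                         + (r * (m2 - c)) ^+ 2) / (p + r) <= _).
  by rewrite ler_wpM2r ?invr_ge0 ?addr_ge0 // addrA sqr_add4_le.
rewrite -mulrA ler_wpM2l // !mulrDl -(sqr_mul_div p) -(sqr_mul_div r).
have le_r (z : R) : (r = 0 -> z = 0) -> z ^+ 2 / (p + r) <= z ^+ 2 / r.
  by move=> z0; rewrite addrC; apply: sqr_div_le_addr.
apply: lerD; [apply: lerD; [apply: lerD|]|].
- exact: sqr_div_le_addr.
- exact: sqr_div_le_addr (pz0 _).
- exact: le_r.
- exact: le_r (rz0 _).
Qed.

Lemma norm_dev_ge_sqrtE (y : nat -> R) lo hi c (tau : R) :
  (lo < hi)%N -> 0 <= tau ->
  (tau <= norm_dev y lo hi c) =
  (Num.sqrt (tau / (hi - lo)%:R) <=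
     `|(\sum_(1 <= m < (hi - lo).+1) y (lo + m)%N) / (hi - lo)%:R - c|).
Proof.
move=> lt_lo_hi tau_ge0.
have n_gt0 : 0 < (hi - lo)%:R :> R by rewrite ltr0n subn_gt0.
rewrite /norm_dev; set z := _ - c.
have -> : dev_sum y lo hi c = (hi - lo)%:R * z.
  rewrite /dev_sum -[lo.+1]add1n (big_addn 1 _ lo) (subSn (ltnW lt_lo_hi)).
  rewrite sumrB sumr_const_nat subSS subn0 /z mulrBr [_ * (_ / _)]mulrC.
  rewrite divfK ?gt_eqF // -[c *+ _]mulr_natl.
  by congr (_ - _); apply: eq_bigr => m _; rewrite addnC.
rewrite sqr_mul_div -sqrtr_sqr ler_psqrt ?nnegrE ?sqr_ge0 ?divr_ge0 ?ler0n //.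
by rewrite ler_pdivrMr // mulrC.
Qed.

Lemma sum_sqr_sub_mean (a b : nat) (y : nat -> R) (c : R) :
  \sum_(a <= n < b) (y n - (\sum_(a <= m < b) y m) / (b - a)%:R) ^+ 2
  = \sum_(a <= n < b) (y n - c) ^+ 2
    - (\sum_(a <= n < b) (y n - c)) ^+ 2 / (b - a)%:R.
Proof.
have [le_ba|lt_ab] := leqP b a; first by rewrite !big_geq // expr0n /= mul0r subr0.
have n_neq0 : (b - a)%:R != 0 :> R by rewrite pnatr_eq0 subn_eq0 -ltnNge.
have sum_dev : \sum_(a <= n < b) (y n - c) = \sum_(a <= m < b) y m - c * (b - a)%:R.
  by rewrite sumrB sumr_const_nat mulr_natr.
rewrite sum_dev; move: sum_dev; set s := \sum_(a <= m < b) y m => sum_dev.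
have -> : \sum_(a <= n < b) (y n - s / (b - a)%:R) ^+ 2
  = \sum_(a <= n < b) ((y n - c) ^+ 2 - 2 * (s / (b - a)%:R - c) * (y n - c)
       + (s / (b - a)%:R - c) ^+ 2).
  by apply: eq_bigr => n _; ring.
rewrite big_split /= sumrB -mulr_sumr sum_dev sumr_const_nat -mulr_natr.
by move: n_neq0; set n := (b - a)%:R => n_neq0; field.
Qed.

Lemma Loss_qE (D : nat) (x : nat -> D.-tuple R) lo hi (c : D.-tuple R) :
  Loss_q x lo.+1 hi = \sum_(i < D)
    (\sum_(lo.+1 <= n < hi.+1) (coord_seq x i n - tnth c i) ^+ 2
     - norm_dev (coord_seq x i) lo hi (tnth c i)).
Proof.
rewrite /Loss_q /sqdist exchange_big /=; apply: eq_bigr => i _.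
rewrite /norm_dev /dev_sum -(subSS lo hi) -(sum_sqr_sub_mean _ _ (coord_seq x i)).
by apply: eq_bigr => n _; rewrite /seg_mean tnth_mktuple.
Qed.

Lemma Loss_q_merge_le (D : nat) (x : nat -> D.-tuple R) lo mid hi
    (c : D.-tuple R) :
  (lo <= mid <= hi)%N ->
  Loss_q x lo.+1 hi - Loss_q x lo.+1 mid - Loss_q x mid.+1 hi <=
  \sum_(i < D) (norm_dev (coord_seq x i) lo mid (tnth c i)
              + norm_dev (coord_seq x i) mid hi (tnth c i)).
Proof.
move=> lo_mid_hi; rewrite !(Loss_qE x _ _ c) -!sumrB; apply: ler_sum => i _.
rewrite /norm_dev (dev_sum_cat _ _ lo_mid_hi).
case/andP: lo_mid_hi => le_lo_mid le_mid_hi.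
rewrite (@big_cat_nat _ _ _ mid.+1) //=.
set S1 := dev_sum _ lo mid _; set S2 := dev_sum _ mid hi _.
set T1 := \sum_(_ <= _ < _) _; set T2 := \sum_(_ <= _ < _) _.
have -> : T1 + T2 - (S1 + S2) ^+ 2 / (hi - lo)%:R - (T1 - S1 ^+ 2 / (mid - lo)%:R)
  - (T2 - S2 ^+ 2 / (hi - mid)%:R) =
  S1 ^+ 2 / (mid - lo)%:R + S2 ^+ 2 / (hi - mid)%:R - (S1 + S2) ^+ 2 / (hi - lo)%:R.
  by ring.
by rewrite lerBlDr lerDl divr_ge0 ?sqr_ge0.
Qed.

Lemma sqdistC (D : nat) (u v : D.-tuple R) : sqdist u v = sqdist v u.
Proof. by apply: eq_bigr => i _; rewrite -sqrrN opprB. Qed.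

Lemma sqdist_ge0 (D : nat) (u v : D.-tuple R) : 0 <= sqdist u v.
Proof. by apply: sumr_ge0 => i _; exact: sqr_ge0. Qed.

Lemma Loss_q_merge_straddle_le (D : nat) (x : nat -> D.-tuple R) lo t1 mid t2 hi
    (m1 m2 m3 : D.-tuple R) (tau : R) :
  (lo <= t1 <= mid)%N -> (mid <= t2 <= hi)%N ->
  (forall i, norm_dev (coord_seq x i) lo t1 (tnth m1 i) <= tau) ->
  (forall i, norm_dev (coord_seq x i) t1 mid (tnth m2 i) <= tau) ->
  (forall i, norm_dev (coord_seq x i) mid t2 (tnth m2 i) <= tau) ->
  (forall i, norm_dev (coord_seq x i) t2 hi (tnth m3 i) <= tau) ->
  Loss_q x lo.+1 hi - Loss_q x lo.+1 mid - Loss_q x mid.+1 hi <=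
  16 * (D%:R * tau) +
    4 * ((t1 - lo)%:R * sqdist m1 m2 + (hi - t2)%:R * sqdist m2 m3).
Proof.
move=> lo_t1_mid mid_t2_hi dev1 dev2 dev3 dev4.
have lo_mid_hi : (lo <= mid <= hi)%N by move: lo_t1_mid mid_t2_hi; lia.
apply: le_trans (Loss_q_merge_le x m2 lo_mid_hi) _.
apply: le_trans (_ : \sum_(i < D) (16 * tau + 4 * ((t1 - lo)%:R *
    (tnth m1 i - tnth m2 i) ^+ 2 + (hi - t2)%:R * (tnth m3 i - tnth m2 i) ^+ 2))
  <= _).
  apply: ler_sum => i _.
  have := norm_dev_split_le (coord_seq x i) (tnth m2 i) (tnth m1 i) (tnth m2 i)
    lo_t1_mid.
  have := norm_dev_split_le (coord_seq x i) (tnth m2 i) (tnth m2 i) (tnth m3 i)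
    mid_t2_hi.
  rewrite subrr expr0n /= !mulr0 !addr0.
  by have := dev1 i; have := dev2 i; have := dev3 i; have := dev4 i; lra.
rewrite big_split /= sumr_const card_ord -mulr_sumr big_split /= -!mulr_sumr.
by rewrite (sqdistC m2) /sqdist -[_ *+ D]mulr_natl mulrCA.
Qed.

End deviation.

Section algorithm.
Variables (R : realType) (D : nat) (x : nat -> D.-tuple R).

Lemma cost_pairmap N l :
  cost x N l =
  \sum_(v <- pairmap (fun a b => Loss_q x a.+1 b) 0%N (l ++ [:: N])) v.
Proof.
rewrite /cost [RHS](big_nth 0) size_pairmap size_cat addn1 big_mkord.
by apply: eq_bigr => j _; rewrite (nth_pairmap 0%N) // size_cat addn1.
Qed.

Lemma sum_pairmap_rem (T : Type) (F : T -> T -> R) y p b c q :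
  \sum_(v <- pairmap F y (p ++ [:: b, c & q])) v =
  \sum_(v <- pairmap F y (p ++ c :: q)) v
    + F (last y p) b + F b c - F (last y p) c.
Proof. by rewrite !pairmap_cat !big_cat /= !big_cons; ring. Qed.

Lemma cost_rem N p b q :
  cost x N (p ++ b :: q) = cost x N (p ++ q) + Loss_q x (last 0%N p).+1 b
    + Loss_q x b.+1 (head N q) - Loss_q x (last 0%N p).+1 (head N q).
Proof.
by rewrite !cost_pairmap -!catA; case: q => [|c q] /=; apply: sum_pairmap_rem.
Qed.

Lemma valid_partition_rem N k p b q :
  valid_partition N k (p ++ b :: q) -> valid_partition N k.-1 (p ++ q).
Proof.
case=> size_l sorted_l; split; first by rewrite -size_l !size_cat addnS.
apply: (subseq_sorted ltn_trans) sorted_l; rewrite /bounds /=.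
by rewrite cat_subseq // cat_subseq ?subseq_cons.
Qed.

Lemma bounds_nth_split N (l : seq nat) j : (j.+2 < size (bounds N l))%N ->
  [/\ l = take j l ++ nth 0%N l j :: drop j.+1 l,
      last 0%N (take j l) = nth 0%N (bounds N l) j,
      nth 0%N l j = nth 0%N (bounds N l) j.+1 &
      head N (drop j.+1 l) = nth 0%N (bounds N l) j.+2].
Proof.
rewrite /bounds /= size_cat addn1 !ltnS => lt_j_l; split.
- by rewrite -drop_nth // cat_take_drop.
- rewrite (last_nth 0%N) size_take lt_j_l.
  by case: j lt_j_l => [|j] lt_j_l //=; rewrite nth_take // nth_cat ltnW.
- by rewrite nth_cat lt_j_l.
- rewrite -nth0 nth_drop addn0 nth_cat; case: ltnP => [lt_j1_l|le_l_j1].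
    exact: set_nth_default.
  have -> : j.+1 = size l by apply/eqP; rewrite eqn_leq lt_j_l.
  by rewrite subnn nth_default.
Qed.

Lemma Alg2_output_merge_gain N Mmax fN beta Mhat lhat j a b c :
  Alg2_output x N Mmax fN beta Mhat lhat -> (j.+2 < size (bounds N lhat))%N ->
  nth 0%N (bounds N lhat) j = a -> nth 0%N (bounds N lhat) j.+1 = b ->
  nth 0%N (bounds N lhat) j.+2 = c ->
  fN <= Loss_q x a.+1 c - Loss_q x a.+1 b - Loss_q x b.+1 c.
Proof.
move=> [m [M [minimal [_ [le_Mhat_M [penalized ->]]]]]] /bounds_nth_split.
case=> + <- <- <- <- <- <-.
move: (take j (m Mhat)) (nth 0%N (m Mhat) j) (drop j.+1 (m Mhat)) => p lj q l_split.
have [valid_l _] := minimal Mhat le_Mhat_M; rewrite l_split in valid_l.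
have Mhat_gt0 : (0 < Mhat)%N by case: valid_l => <- _; rewrite size_cat addnS.
have le_Mhat1_M : (Mhat.-1 <= M)%N by rewrite (leq_trans (leq_pred _)).
have opt := (minimal _ le_Mhat1_M).2 _ (valid_partition_rem valid_l).
have := penalized _ le_Mhat1_M; rewrite l_split cost_rem.
have -> : Mhat%:R = Mhat.-1%:R + 1 :> R by rewrite natr1 prednK.
lra.
Qed.

End algorithm.

Section probability.
Variables (R : realType) (d : measure_display) (T : measurableType d).

Lemma measurable_fun_sum_in (I : eqType) (s : seq I) (h : I -> T -> R) :
  (forall m, m \in s -> measurable_fun setT (h m)) ->
  measurable_fun setT (fun w => \sum_(m <- s) h m w).
Proof.
elim: s => [|a s IH] mh.
  by under eq_fun do rewrite big_nil; exact: measurable_cst.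
under eq_fun do rewrite big_cons.
apply: measurable_realfun.measurable_funD; first by apply: mh; rewrite mem_head.
by apply: IH => m ms; apply: mh; rewrite in_cons ms orbT.
Qed.

Lemma mutually_independent_shift d' d'' (T' : measurableType d')
    (T'' : measurableType d'') (P : probability T R) (Y : nat -> T -> T')
    (g : T' -> T'') N p n :
  measurable_fun setT g ->
  mutually_independent P [set q | (1 <= q <= N)%N] Y -> (p + n <= N)%N ->
  mutually_independent P [set m | (1 <= m <= n)%N] (fun m w => g (Y (p + m)%N w)).
Proof.
move=> mg [mY indep] le_pn_N; split=> [m /= m_in|S B uniq_S S_sub mB].
  by apply: measurableT_comp mg (mY _ _) => /=; lia.
have := indep (map (addn p) S) (fun q => g @^-1` B (q - p)%N).
rewrite map_inj_uniq; last exact: addnI.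
have preimageE :
    [set w | forall q, q \in map (addn p) S -> (g @^-1` B (q - p)%N) (Y q w)]
  = [set w | forall m, m \in S -> B m (g (Y (p + m)%N w))].
  apply/seteqP; split=> w /= Bw m.
    by move=> m_in; have := Bw _ (map_f _ m_in); rewrite addKn.
  by case/mapP=> m' m'_in ->; rewrite addKn; exact: Bw.
rewrite preimageE big_map => ->//.
- by congr (_%:E); apply: eq_bigr => m _; rewrite addKn.
- by move=> q /mapP [m /S_sub /= m_in ->]; lia.
- by move=> q; rewrite -[_ @^-1` _]setTI; exact: mg.
Qed.

Lemma measure_bigsetU_le (mu : {measure set T -> \bar R}) (I : Type) (s : seq I)
    (F : I -> set T) (c : R) :
  (forall t, measurable (F t)) -> (forall t, mu (F t) <= c%:E)%E ->
  (mu (\big[setU/set0]_(t <- s) F t) <= ((size s)%:R * c)%:E)%E.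
Proof.
move=> mF le_c; elim: s => [|t s IH]; first by rewrite big_nil measure0 mul0r.
rewrite big_cons; apply: le_trans (measureU2 _ _ _) _ => //.
  by apply: bigsetU_measurable => ? _; exact: mF.
by rewrite /= -addn1 natrD mulrDl mul1r EFinD addeC leeD.
Qed.

Lemma negligible_limsup_event (mu : {measure set T -> \bar R})
    (E F : (set T)^nat) N1 :
  (forall N, measurable (F N)) -> (\sum_(N <oo) mu (F N) < +oo)%E ->
  (forall N, (N1 <= N)%N -> E N `<=` F N) -> mu.-negligible (limsup_event E).
Proof.
move=> mF summable EF; exists (lim_sup_set F); split.
- apply: bigcap_measurable => // n _.
  by apply: bigcup_measurable => m _; exact: mF.
- exact: lim_sup_set_cvg0.
- move=> w Ew n _; have [N [le_N EN]] := Ew (maxn n N1).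
  by exists N; [|apply: EF EN]; move: le_N; rewrite geq_max => /andP[].
Qed.

Lemma nneseries_inv_sqr_lt_pinfty (u : (\bar R)^nat) (K : R) :
  (forall n, 0 <= u n)%E -> (forall n, u n <= (K / n.+1%:R ^+ 2)%:E)%E ->
  (\sum_(n <oo) u n < +oo)%E.
Proof.
move=> u_ge0 u_le.
have K_ge0 : 0 <= K.
  by have := le_trans (u_ge0 0%N) (u_le 0%N); rewrite lee_fin expr1n divr1.
apply: (@le_lt_trans _ _ (2 * K)%:E); last exact: ltry.
apply: lime_le; first exact: is_cvg_nneseries.
apply: nearW => m.
apply: le_trans
  (_ : (\sum_(0 <= n < m) (2 * K * (n.+1%:R^-1 - n.+2%:R^-1))%:E <= _)%E).
  apply: lee_sum => n _; apply: le_trans (u_le n) _; rewrite lee_fin.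
  rewrite -[n.+2%:R]natr1; have : 1 <= n.+1%:R :> R by rewrite ler1n.
  move: n.+1%:R => x x_ge1; rewrite -subr_ge0.
  have -> : 2 * K * (x^-1 - (x + 1)^-1) - K / x ^+ 2 =
            K * (x - 1) / (x ^+ 2 * (x + 1)).
    by field; rewrite !gt_eqF //; lra.
  have x_ge0 : 0 <= x by lra.
  by rewrite divr_ge0 ?mulr_ge0 ?exprn_ge0 ?subr_ge0 ?addr_ge0.
rewrite sumEFin lee_fin -mulr_sumr.
have sum_telescope : \sum_(0 <= n < m) (n.+1%:R^-1 - n.+2%:R^-1) = 1 - m.+1%:R^-1 :> R.
  rewrite (@telescope_sumr_eq _ 0 m (fun k => - k.+1%:R^-1)) //.
    by rewrite invr1 opprK addrC.
  by move=> n _; rewrite opprK addrC.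
by rewrite sum_telescope -[X in _ <= X]mulr1 ler_wpM2l ?mulr_ge0 // gerBl invr_ge0.
Qed.

End probability.

Section segments.
Variables (R : realType) (d : measure_display) (Omega : measurableType d)
  (D M0 : nat) (X : nat -> nat -> Omega -> D.-tuple R) (L : nat -> nat -> nat)
  (mu : nat -> D.-tuple R) (f : nat -> R) (N0 : nat).

Hypothesis L_bounds : forall N, (N0 <= N)%N ->
  [/\ L N 0%N = 0%N, L N M0.+1 = N & forall j, (j <= M0)%N -> (L N j < L N j.+1)%N].
Hypothesis D_gt0 : (0 < D)%N.
Hypothesis f_gt0 : forall N, 0 < f N.

(* Chosen so that 16 D tau + 8 f N / 100 < f N, see split_event_sub_bad. *)
Definition tau N := f N / 25 / D%:R.

Definition in_segment N j lo hi :=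
  [&& (1 <= j <= M0.+1)%N, (L N j.-1 <= lo)%N, (lo <= hi)%N & (hi <= L N j)%N].

Definition block_event N j (i : 'I_D) lo hi : set Omega :=
  if [&& (N0 <= N)%N, in_segment N j lo hi & (lo < hi)%N] then
    [set w | tau N <=
             norm_dev (coord_seq (fun n => X N n w) i) lo hi (tnth (mu j) i)]
  else set0.

Definition bad_event N : set Omega :=
  \big[setU/set0]_(t : 'I_M0.+2 * 'I_D * 'I_N.+1 * 'I_N.+1)
    let: (j, i, lo, hi) := t in block_event N j i lo hi.

Lemma L_mono N a b : (N0 <= N)%N -> (a <= b <= M0.+1)%N -> (L N a <= L N b)%N.
Proof.
move=> N_ge /andP[le_ab le_b]; have [_ _ L_incr] := L_bounds N_ge.
elim: b le_ab le_b => [|b IH]; first by rewrite leqn0 => /eqP->.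
rewrite leq_eqVlt => /orP[/eqP-> //|lt_ab le_b].
exact: leq_trans (IH lt_ab (ltnW le_b)) (ltnW (L_incr b le_b)).
Qed.

Lemma L_le N j : (N0 <= N)%N -> (j <= M0.+1)%N -> (L N j <= N)%N.
Proof.
move=> N_ge le_j; have [_ L_last _] := L_bounds N_ge.
by rewrite -{2}L_last L_mono // le_j leqnn.
Qed.

Lemma tau_gt0 N : 0 < tau N.
Proof. by rewrite !divr_gt0 // ltr0n. Qed.

Lemma norm_dev_le_tau N w j i lo hi : (N0 <= N)%N -> ~ bad_event N w ->
  in_segment N j lo hi ->
  norm_dev (coord_seq (fun n => X N n w) i) lo hi (tnth (mu j) i) <= tau N.
Proof.
move=> N_ge not_bad seg; have [le_hi_lo|lt_lo_hi] := leqP hi lo.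
  by rewrite /norm_dev dev_sum_empty // expr0n /= mul0r ltW // tau_gt0.
rewrite leNgt; apply/negP => tau_lt; apply: not_bad.
case/and4P: (seg) => /andP[_ le_j] _ _ le_hi.
have le_hi_N : (hi <= N)%N by apply: leq_trans le_hi (L_le N_ge le_j).
have le_lo_N : (lo <= N)%N by rewrite (leq_trans (ltnW lt_lo_hi)).
rewrite /bad_event (bigD1 (@Ordinal M0.+2 j le_j, i, @Ordinal N.+1 lo le_lo_N,
  @Ordinal N.+1 hi le_hi_N)) //=; left.
by rewrite /block_event N_ge seg lt_lo_hi /= ltW.
Qed.

Section concentration.
Variables (P : probability Omega R) (G : nat -> probability (D.-tuple R) R)
  (c0 C : R).

Hypothesis X_indep : forall N, (N0 <= N)%N ->
  mutually_independent P [set n | (1 <= n <= N)%N] (X N).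

Lemma block_event_measurable N j i lo hi : measurable (block_event N j i lo hi).
Proof.
rewrite /block_event; case: ifP => [|_]; last exact: measurable0.
case/and3P=> N_ge /and4P[/andP[_ le_j] _ _ le_hi] _.
have m_dev : measurable_fun setT
    (fun w => norm_dev (coord_seq (fun n => X N n w) i) lo hi (tnth (mu j) i)).
  apply: measurable_realfun.measurable_funM => //.
  apply: measurable_realfun.measurable_funX.
  apply: measurable_fun_sum_in => q; rewrite mem_index_iota => q_in.
  apply: measurable_realfun.measurable_funB => //.
  apply: measurableT_comp (measurable_tnth i) ((X_indep N_ge).1 q _) => /=.
  by have := L_le N_ge le_j; lia.
have := m_dev measurableT _ (measurable_itv `[tau N, +oo[).
rewrite setTI; congr measurable; apply/seteqP; split => w /=;
  by rewrite in_itv /= andbT.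
Qed.

Lemma bad_event_measurable N : measurable (bad_event N).
Proof.
by apply: bigsetU_measurable => -[[[j i] lo] hi] _; exact: block_event_measurable.
Qed.

Hypothesis X_law : forall N, (N0 <= N)%N -> forall j, (1 <= j <= M0.+1)%N ->
  forall n, (L N j.-1 < n <= L N j)%N ->
  forall B, measurable B -> P (X N n @^-1` B) = G j B.
Hypothesis subgaussian : forall j, (1 <= j <= M0.+1)%N ->
  forall (i : 'I_D) (n : nat) (a : R), (1 <= n)%N -> 0 < a ->
  forall (d' : measure_display) (T : measurableType d') (Q : probability T R)
         (Z : nat -> T -> R),
    mutually_independent Q [set m | (1 <= m <= n)%N] Z ->
    (forall m, (1 <= m <= n)%N -> forall B, measurable B ->
       Q (Z m @^-1` B) = G j [set v | B (tnth v i)]) ->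
    (Q [set w | (a <= `|(\sum_(1 <= m < n.+1) Z m w) / n%:R - tnth (mu j) i|)%R]
      <= (2 * expR (- c0 * a ^+ 2 * n%:R))%:E)%E.
Hypothesis c0_gt0 : 0 < c0.
Hypothesis C_gt : 100 * D%:R / c0 < C.
Hypothesis f_ge_log : forall N, (N0 <= N)%N -> C * ln N%:R <= f N.

Lemma log_le_c0_tau N : (N0 <= N)%N -> (1 <= N)%N -> 4 * ln N%:R <= c0 * tau N.
Proof.
move=> N_ge N_ge1; have ln_ge0 : 0 <= ln N%:R :> R by rewrite ln_ge0 // ler1n.
have D_pos : 0 < D%:R :> R by rewrite ltr0n.
have C_c0 : 100 * D%:R < C * c0 by rewrite -ltr_pdivrMr.
rewrite /tau !mulrA !ler_pdivlMr //.
have le_f := f_ge_log N_ge.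
have step1 : 4 * ln N%:R * D%:R * 25 <= C * c0 * ln N%:R.
  by rewrite -subr_ge0 (_ : _ - _ = (C * c0 - 100 * D%:R) * ln N%:R);
    [rewrite mulr_ge0 // subr_ge0 ltW | ring].
by apply: le_trans step1 _; rewrite mulrAC [c0 * _]mulrC ler_wpM2r // ltW.
Qed.

Lemma block_event_le N j i lo hi :
  (P (block_event N j i lo hi) <= (2 * (N%:R ^+ 4)^-1)%:E)%E.
Proof.
rewrite /block_event; case: ifP => [|_]; last first.
  by rewrite measure0 lee_fin mulr_ge0 // invr_ge0 exprn_ge0.
case/and3P=> N_ge /and4P[j_seg le_lo _ le_hi] lt_lo_hi.
have le_hi_N : (hi <= N)%N.
  by apply: leq_trans le_hi (L_le N_ge _); case/andP: j_seg.
set n := (hi - lo)%N.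
have n_ge1 : (1 <= n)%N by rewrite subn_gt0.
have le_N : (lo + n <= N)%N by rewrite /n subnKC // ltnW.
have indep := mutually_independent_shift (measurable_tnth i) (X_indep N_ge) le_N.
have law m : (1 <= m <= n)%N -> forall B, measurable B ->
    P ((fun w => tnth (X N (lo + m)%N w) i) @^-1` B) = G j [set v | B (tnth v i)].
  move=> m_in B mB; apply: X_law => //; first by move: m_in le_lo; rewrite /n; lia.
  by rewrite -[X in measurable X]setTI; exact: measurable_tnth.
have a_gt0 : 0 < Num.sqrt (tau N / n%:R).
  by rewrite sqrtr_gt0 divr_gt0 ?tau_gt0 ?ltr0n.
have tau_ge0 := ltW (tau_gt0 N).
have N_ge1 : (1 <= N)%N by apply: leq_trans le_hi_N; apply: leq_ltn_trans lt_lo_hi.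
(* This is the deviation event of (A.4) for a = sqrt (tau / n), whose bound
   2 exp (- c0 a^2 n) = 2 exp (- c0 tau) does not depend on the block length. *)
have -> : [set w | tau N <=
           norm_dev (coord_seq (fun n => X N n w) i) lo hi (tnth (mu j) i)]
  = [set w | Num.sqrt (tau N / n%:R) <=
       `|(\sum_(1 <= m < n.+1) tnth (X N (lo + m)%N w) i) / n%:R
         - tnth (mu j) i|].
  by apply/seteqP; split=> w /=; rewrite norm_dev_ge_sqrtE.
apply: le_trans (subgaussian j_seg n_ge1 a_gt0 indep law) _.
rewrite lee_fin ler_wpM2l // (sqr_sqrtr (divr_ge0 tau_ge0 (ler0n _ _))).
have -> : - c0 * (tau N / n%:R) * n%:R = - (c0 * tau N).
  by field; rewrite pnatr_eq0 -lt0n.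
by rewrite expR_le_inv_pow4 // log_le_c0_tau.
Qed.

Lemma bad_event_le N :
  (P (bad_event N) <= (32 * (M0.+2 * D)%:R / N.+1%:R ^+ 2)%:E)%E.
Proof.
rewrite /bad_event -big_enum /=.
apply: le_trans (measure_bigsetU_le _ (c := 2 * (N%:R ^+ 4)^-1) _ _) _.
- by move=> [[[j i] lo] hi]; exact: block_event_measurable.
- by move=> [[[j i] lo] hi]; exact: block_event_le.
rewrite -cardE !card_prod !card_ord lee_fin !natrM.
have K_ge0 : 0 <= (M0.+2)%:R * D%:R :> R by rewrite mulr_ge0.
have := ler_wpM2l (mulr_ge0 (ler0n _ 2) K_ge0) (sqr_inv_pow4_le R N).
congr (_ <= _); ring.
Qed.

End concentration.

Section spurious_split.
Variables (Mmax : nat -> nat) (beta : nat -> R) (k : nat) (eta : nat -> nat).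
Hypothesis k_bounds : (2 <= k <= M0)%N.
Hypothesis eta_le : forall N, (N0 <= N)%N ->
  (eta N <= minn (L N k.-1 - L N k.-2) (L N k.+1 - L N k))%N.
Hypothesis penalty_left : forall N, (N0 <= N)%N ->
  100 * sqdist (mu k.-1) (mu k) * (eta N)%:R <= f N.
Hypothesis penalty_right : forall N, (N0 <= N)%N ->
  100 * sqdist (mu k) (mu k.+1) * (eta N)%:R <= f N.

Definition split_event N : set Omega := [set w |
  exists (Mhat : nat) (lhat : seq nat),
    Alg2_output (fun n => X N n w) N (Mmax N) (f N) (beta N) Mhat lhat /\
    exists n1 n2 n3 : nat,
      [/\ (1 <= n1 <= L N k - L N k.-1)%N, (1 <= n2 <= eta N)%N,
          (1 <= n3 <= eta N)%N &
          exists j, [/\ (j.+2 < size (bounds N lhat))%N,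
              nth 0%N (bounds N lhat) j = (L N k.-1 - n3)%N,
              nth 0%N (bounds N lhat) j.+1 = (L N k.-1 + n1)%N &
              nth 0%N (bounds N lhat) j.+2 = (L N k + n2)%N]]].

Lemma split_event_sub_bad N : (N0 <= N)%N -> split_event N `<=` bad_event N.
Proof.
move=> N_ge w [Mhat [lhat [alg [n1 [n2 [n3 [n1_in n2_in n3_in
  [j [j_lt ea eb ec]]]]]]]]].
apply: contrapT => not_bad.
have := Alg2_output_merge_gain alg j_lt ea eb ec.
have := eta_le N_ge; rewrite leq_min => /andP[eta_left eta_right].
have L21 : (L N k.-2 <= L N k.-1)%N by apply: L_mono; lia.
have L1k : (L N k.-1 <= L N k)%N by apply: L_mono; lia.
have Lk1 : (L N k <= L N k.+1)%N by apply: L_mono; lia.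
have good j' lo hi : in_segment N j' lo hi -> forall i,
    norm_dev (coord_seq (fun n => X N n w) i) lo hi (tnth (mu j') i) <= tau N.
  by move=> seg i; exact: norm_dev_le_tau.
have seg_left : in_segment N k.-1 (L N k.-1 - n3) (L N k.-1).
  by rewrite /in_segment; lia.
have seg_mid1 : in_segment N k (L N k.-1) (L N k.-1 + n1).
  by rewrite /in_segment; lia.
have seg_mid2 : in_segment N k (L N k.-1 + n1) (L N k).
  by rewrite /in_segment; lia.
have seg_right : in_segment N k.+1 (L N k) (L N k + n2).
  by rewrite /in_segment /=; lia.
have left_order : (L N k.-1 - n3 <= L N k.-1 <= L N k.-1 + n1)%N by lia.
have right_order : (L N k.-1 + n1 <= L N k <= L N k + n2)%N by lia.
have := Loss_q_merge_straddle_le left_order right_order (good _ _ _ seg_left)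
  (good _ _ _ seg_mid1) (good _ _ _ seg_mid2) (good _ _ _ seg_right).
rewrite subKn ?addKn; last by lia.
have D_tau : D%:R * tau N = f N / 25.
  by rewrite /tau; field; rewrite pnatr_eq0 -lt0n.
have eta_term (n : nat) (s : R) : (n <= eta N)%N -> 0 <= s ->
    100 * s * (eta N)%:R <= f N -> n%:R * s <= f N / 100.
  move=> le_n s_ge0 le_f; apply: le_trans (_ : (eta N)%:R * s <= _).
    by rewrite ler_wpM2r // ler_nat.
  by lra.
have := eta_term n3 _ (proj2 (andP n3_in)) (sqdist_ge0 _ _) (penalty_left N_ge).
have := eta_term n2 _ (proj2 (andP n2_in)) (sqdist_ge0 _ _) (penalty_right N_ge).
have := f_gt0 N; rewrite D_tau; lra.
Qed.

End spurious_split.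

End segments.

Unset Implicit Arguments.

Theorem lemma6 (R : realType) (d : measure_display) (Omega : measurableType d)
  (P : probability Omega R) (D M0 : nat)
  (* X N n = X_n for sample size N, n = 1..N *)
  (X : nat -> nat -> Omega -> D.-tuple R)
  (* change points L N j, j = 0..M0+1 *)
  (L : nat -> nat -> nat)
  (G : nat -> probability (D.-tuple R) R) (mu : nat -> D.-tuple R)
  (c0 C : R) (Mmax : nat -> nat) (f : nat -> R) (beta : nat -> R)
  (k : nat) (eta : nat -> nat) (N0 : nat) :
  (1 < M0)%N ->
  (* model (M.2), for all sample sizes N >= N0 *)
  (forall N, (N0 <= N)%N ->
     [/\ L N 0%N = 0%N, L N M0.+1 = N & forall j, (j <= M0)%N -> (L N j < L N j.+1)%N]) ->
  (forall j, (1 <= j <= M0.+1)%N ->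
     forall m : nat, exists N1, forall N, (N1 <= N)%N -> (m <= L N j - L N j.-1)%N) ->
  (forall N, (N0 <= N)%N ->
     mutually_independent P [set n | (1 <= n <= N)%N] (X N)) ->
  (forall N, (N0 <= N)%N -> forall j, (1 <= j <= M0.+1)%N ->
     forall n, (L N j.-1 < n <= L N j)%N ->
     forall B, measurable B -> P (X N n @^-1` B) = G j B) ->
  (forall j, (1 <= j <= M0.+1)%N -> forall i : 'I_D,
     (G j).-integrable setT (fun v => (tnth v i ^+ 2)%:E) /\
     (\int[G j]_v (tnth v i)%:E = (tnth (mu j) i)%:E)%E) ->
  (forall j, (1 <= j <= M0)%N -> mu j <> mu j.+1) ->
  (* (A.4) *)
  0 < c0 ->
  (forall j, (1 <= j <= M0.+1)%N -> forall (i : 'I_D) (n : nat) (a : R),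
     (1 <= n)%N -> 0 < a ->
     forall (d' : measure_display) (T : measurableType d') (Q : probability T R)
            (Z : nat -> T -> R),
       mutually_independent Q [set m | (1 <= m <= n)%N] Z ->
       (forall m, (1 <= m <= n)%N -> forall B, measurable B ->
          Q (Z m @^-1` B) = G j [set v | B (tnth v i)]) ->
       (Q [set w | (a <= `|(\sum_(1 <= m < n.+1) Z m w) / n%:R - tnth (mu j) i|)%R]
         <= (2 * expR (- c0 * a ^+ 2 * n%:R))%:E)%E) ->
  (* Algorithm 2 inputs *)
  (forall N, (1 <= Mmax N)%N) ->
  (forall N, 0 < f N) ->
  (* k, eta, penalty *)
  (2 <= k <= M0)%N ->
  (forall N, (N0 <= N)%N ->
     (1 <= eta N)%N /\ (eta N <= minn (L N k.-1 - L N (k.-2)) (L N k.+1 - L N k))%N) ->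
  100 * D%:R / c0 < C ->
  (forall N, (N0 <= N)%N ->
     Num.max (100 * sqdist (mu k.-1) (mu k) * (eta N)%:R)
       (Num.max (100 * sqdist (mu k) (mu k.+1) * (eta N)%:R) (C * ln N%:R)) <= f N) ->
  P.-negligible (limsup_event (fun N => [set w |
     exists (Mhat : nat) (lhat : seq nat),
       Alg2_output (fun n => X N n w) N (Mmax N) (f N) (beta N) Mhat lhat /\
       exists n1 n2 n3 : nat,
         [/\ (1 <= n1 <= L N k - L N k.-1)%N, (1 <= n2 <= eta N)%N,
             (1 <= n3 <= eta N)%N &
             exists j, [/\ (j.+2 < size (bounds N lhat))%N,
                 nth 0%N (bounds N lhat) j = (L N k.-1 - n3)%N,
                 nth 0%N (bounds N lhat) j.+1 = (L N k.-1 + n1)%N &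
                 nth 0%N (bounds N lhat) j.+2 = (L N k + n2)%N]]])).
Proof.
move=> M0_gt1 L_bounds _ X_indep X_law _ mu_neq c0_gt0 subgaussian _ f_gt0 k_bounds
  eta_bounds C_gt penalty.
have D_gt0 : (0 < D)%N.
  case: (posnP D) => [D0|//]; subst D; exfalso.
  apply: (mu_neq 1%N); first by rewrite leqnn ltnW.
  by rewrite (tuple0 (mu 1%N)) (tuple0 (mu 2%N)).
have pen_left N : (N0 <= N)%N ->
    100 * sqdist (mu k.-1) (mu k) * (eta N)%:R <= f N.
  by move=> /penalty; rewrite !ge_max => /and3P[].
have pen_right N : (N0 <= N)%N ->
    100 * sqdist (mu k) (mu k.+1) * (eta N)%:R <= f N.
  by move=> /penalty; rewrite !ge_max => /and3P[].
have f_ge_log N : (N0 <= N)%N -> C * ln N%:R <= f N.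
  by move=> /penalty; rewrite !ge_max => /and3P[].
have eta_le N : (N0 <= N)%N ->
    (eta N <= minn (L N k.-1 - L N k.-2) (L N k.+1 - L N k))%N.
  by case/eta_bounds.
apply: negligible_limsup_event
  (split_event_sub_bad L_bounds D_gt0 f_gt0 k_bounds eta_le pen_left pen_right).
  by move=> N; exact: (bad_event_measurable mu f L_bounds D_gt0 X_indep N).
apply: (nneseries_inv_sqr_lt_pinfty (K := 32 * (M0.+2 * D)%:R)) => N.
  exact: measure_ge0.
exact: (bad_event_le L_bounds D_gt0 f_gt0 X_indep X_law subgaussian c0_gt0 C_gt
  f_ge_log N).
Qed.
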